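(* Let $d\ge2$ and consider a $d$-dimensional system in the maximally mixed initial state $\mathbb{1}/d$, with two measurement settings $x,y\in\{0,1\}$ and outcomes $\pm$. Each measurement $x$ is specified by effects $\mathcal{E}_{\pm|x}$ (positive semidefinite, summing to $\mathbb{1}$) and post-measurement states $\sigma_{\pm|x}$, the same measurements being used at both time steps, with $p(ab|xy)=\mathrm{tr}(\mathcal{E}_{a|x}\mathbb{1}/d)\,\mathrm{tr}(\mathcal{E}_{b|y}\sigma_{a|x})$. Then, for all such choices, $$\mathcal{B}_1=p(++|00)+p(++|11)+p(+-|01)+p(+-|10)\le \max\left[3,\,4\left(1-\tfrac1d\right)\right].$$ *)

From HB Require Import structures.
From mathcomp Require Import all_boot all_order all_algebra.
From mathcomp Require Import complex reals.
Set Implicit Arguments. Unset Strict Implicit. Unset Printing Implicit Defensive.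
Import Order.TTheory GRing.Theory Num.Theory.
Local Open Scope ring_scope.
Local Open Scope complex_scope.

Definition adjmx (C : numClosedFieldType) m n (A : 'M[C]_(m, n)) : 'M[C]_(n, m) :=
  (map_mx Num.conj A)^T.

Definition psd (C : numClosedFieldType) d (A : 'M[C]_d) : Prop :=
  adjmx A = A /\ forall v : 'cV[C]_d, 0 <= (adjmx v *m A *m v) 0 0.

Definition density (C : numClosedFieldType) d (rho : 'M[C]_d) : Prop :=
  psd rho /\ \tr rho = 1.

(* Two-outcome measurement instrument, indexed by setting x : bool
   (false = 0, true = 1) and outcome a : bool (true = '+', false = '-'):
   effects E x a are psd and sum to the identity; the post-measurement
   state for outcome a of setting x is sigma x a, a density matrix. *)
Definition valid_measurements (C : numClosedFieldType) d
    (E sigma : bool -> bool -> 'M[C]_d) : Prop :=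
  (forall x a, psd (E x a)) /\
  (forall x, E x true + E x false = 1%:M) /\
  (forall x a, density (sigma x a)).

Definition seqprob (C : numClosedFieldType) d (E sigma : bool -> bool -> 'M[C]_d)
    (a b x y : bool) : C :=
  \tr (E x a *m ((d%:R)^-1 *: 1%:M)) * \tr (E y b *m sigma x a).

Definition B1 (C : numClosedFieldType) d (E sigma : bool -> bool -> 'M[C]_d) : C :=
  seqprob E sigma true true false false + seqprob E sigma true true true true
  + seqprob E sigma true false false true + seqprob E sigma true false true false.

(* Write t_x = tr E_{+|x}, so that the first outcome is + with probability
   t_x / d.  Diagonalising a state sigma shows tr (F sigma) <= tr F and
   0 <= tr (F sigma) <= 1 for every effect F; in particular, after the first
   outcome +, the second outcome - with setting y has probability at most
   min (1, tr E_{-|y}) = min (1, d - t_y).  Hence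
   d B_1 <= t_0 (1 + min (1, d - t_1)) + t_1 (1 + min (1, d - t_0)), and this
   elementary bound in t_0, t_1 in [0, d] is at most 4 (d - 1) for d >= 3 and
   at most 3 d for d <= 3. *)

From HB Require Import structures.
From mathcomp Require Import all_boot all_order all_algebra.
From mathcomp Require Import complex reals.
From mathcomp Require Import ring lra.
Import Order.TTheory GRing.Theory Num.Theory.
Local Open Scope ring_scope.

Section PsdTrace.
Context {C : numClosedFieldType} {n : nat}.
Local Open Scope sesquilinear_scope.

Lemma adjmxE m p (A : 'M[C]_(m, p)) : adjmx A = A ^t*.
Proof. by rewrite /adjmx map_trmx. Qed.

Lemma psd1 : psd (1%:M : 'M[C]_n).
Proof.
split; first by rewrite adjmxE trmx1 map_mx1.
move=> v; rewrite mulmx1 mxE; apply: sumr_ge0 => j _.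
by rewrite !mxE mulrC -normCK exprn_ge0.
Qed.

Lemma psd_conj_diag_ge0 (P F : 'M[C]_n) i : psd F -> 0 <= (P *m F *m P^t*) i i.
Proof.
case=> _ F_ge0; have := F_ge0 (col i (P^t*)).
have -> : adjmx (col i (P^t*)) = row i P.
  by apply/matrixP => a b; rewrite !mxE conjCK.
congr (0 <= _); rewrite !mxE; apply: eq_bigr => j _; rewrite !mxE.
by congr (_ * _); apply: eq_bigr => k _; rewrite !mxE.
Qed.

Lemma mxtrace_unitary_conj {P : 'M[C]_n} (F : 'M[C]_n) :
  P \is unitarymx -> \tr (P *m F *m P^t*) = \tr F.
Proof.
move=> P_unitary; rewrite mxtrace_mulC mulmxA -invmx_unitary //.
by rewrite mulVmx ?mul1mx // unitarymx_unit.
Qed.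

Lemma mxtrace_mul_spectral {S : 'M[C]_n} : adjmx S = S -> forall F,
  let P := spectralmx S in
  \tr (F *m S) = \sum_i (P *m S *m P^t*) i i * (P *m F *m P^t*) i i.
Proof.
move=> S_herm F P; have P_unitary : P \is unitarymx by exact: spectral_unitarymx.
have /orthomx_spectralP : S \is normalmx by apply/normalmxP; rewrite -adjmxE S_herm.
rewrite -/P invmx_unitary // => S_diag.
have PPt : P *m P^t* = 1%:M by apply/unitarymxP.
have -> : P *m S *m P^t* = diag_mx (spectral_diag S).
  by rewrite {1}S_diag !mulmxA PPt mul1mx -mulmxA PPt mulmx1.
rewrite {1}S_diag mulmxA mxtrace_mulC !mulmxA mxtrace_mulC.
apply: eq_bigr => i _.
by rewrite mul_diag_mx mxE [X in _ = X * _]mxE eqxx mulr1n.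
Qed.

Lemma psd_mxtrace_mul_ge0 {F S : 'M[C]_n} : psd F -> psd S -> 0 <= \tr (F *m S).
Proof.
move=> F_psd S_psd; rewrite (mxtrace_mul_spectral S_psd.1).
by apply: sumr_ge0 => i _; apply: mulr_ge0; apply: psd_conj_diag_ge0.
Qed.

Lemma psd_mxtrace_ge0 {F : 'M[C]_n} : psd F -> 0 <= \tr F.
Proof. by move=> F_psd; rewrite -[F]mulmx1 (psd_mxtrace_mul_ge0 F_psd psd1). Qed.

Lemma psd_mxtrace_mul_le {F S : 'M[C]_n} :
  psd F -> psd S -> \tr (F *m S) <= \tr F * \tr S.
Proof.
move=> F_psd S_psd; rewrite (mxtrace_mul_spectral S_psd.1).
set P := spectralmx S; have P_unitary : P \is unitarymx by exact: spectral_unitarymx.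
rewrite -(mxtrace_unitary_conj F P_unitary) -(mxtrace_unitary_conj S P_unitary).
rewrite mulrC mulr_suml; apply: ler_sum => i _.
rewrite ler_wpM2l ?psd_conj_diag_ge0 // /mxtrace (bigD1 i) //= lerDl.
by apply: sumr_ge0 => j _; apply: psd_conj_diag_ge0.
Qed.

Lemma mxtrace_mul_density_le1 {F S : 'M[C]_n} :
  psd (1%:M - F) -> density S -> \tr (F *m S) <= 1.
Proof.
move=> F_le1 [S_psd S_tr1].
have := psd_mxtrace_mul_ge0 F_le1 S_psd.
by rewrite mulmxBl mul1mx raddfB /= S_tr1 subr_ge0.
Qed.

Lemma valid_measurements_compl {E sigma : bool -> bool -> 'M[C]_n} :
  valid_measurements E sigma -> forall x a, E x (~~ a) = 1%:M - E x a.
Proof.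
case=> _ [E_sum _] x [|] /=; rewrite -(E_sum x) ?addrK //.
by rewrite [_ + E x false]addrC addrK.
Qed.

End PsdTrace.

(* [t_x] plays the role of [tr E_{+|x}], [q] and [r] of the probabilities of
   the second outcome [+] resp. [-] after the first outcome [+]. *)
Lemma sequential_bound (R : realFieldType) (D t0 t1 q0 q1 r0 r1 : R) :
  2 <= D -> 0 <= t0 <= D -> 0 <= t1 <= D -> q0 <= 1 -> q1 <= 1 ->
  0 <= r0 <= 1 -> 0 <= r1 <= 1 -> r0 <= D - t1 -> r1 <= D - t0 ->
  D^-1 * (t0 * (q0 + r0) + t1 * (q1 + r1)) <= Num.max 3 (4 * (1 - D^-1)).
Proof.
move=> D_ge2 /andP[t0_ge0 t0_le] /andP[t1_ge0 t1_le] q0_le1 q1_le1 *.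
rewrite ler_pdivrMl; last by lra.
apply: (@le_trans _ _ (t0 * (1 + r0) + t1 * (1 + r1))).
  by rewrite lerD // ler_wpM2l // lerD2r.
rewrite maxr_pMr; last by lra.
have -> : D * (4 * (1 - D^-1)) = 4 * D - 4.
  by field; apply/eqP => D0; move: D_ge2; rewrite D0; lra.
by rewrite le_max; case: (lerP D 3) => D3; apply/orP; [left | right]; nra.
Qed.

Local Open Scope complex_scope.

Lemma sequential_bound_complex (R : rcfType) (n : nat) (t0 t1 q0 q1 r0 r1 : R[i]) :
  (2 <= n)%N -> 0 <= t0 <= n%:R -> 0 <= t1 <= n%:R ->
  0 <= q0 <= 1 -> 0 <= q1 <= 1 -> 0 <= r0 <= 1 -> 0 <= r1 <= 1 ->
  r0 <= n%:R - t1 -> r1 <= n%:R - t0 ->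
  n%:R^-1 * (t0 * (q0 + r0) + t1 * (q1 + r1))
    <= (Num.max 3 (4 * (1 - n%:R^-1)))%:C.
Proof.
move=> n_ge2 t0b t1b q0b q1b r0b r1b.
have realE (x y : R[i]) : 0 <= x <= y -> x = (complex.Re x)%:C.
  by case/andP => /ger0_real/RRe_real ->.
move: (t0b) (t1b) (q0b) (q1b) (r0b) (r1b).
rewrite (realE _ _ t0b) (realE _ _ t1b) (realE _ _ q0b) (realE _ _ q1b).
rewrite (realE _ _ r0b) (realE _ _ r1b) -!(rmorph_nat (real_complex R)).
rewrite -(rmorph1 (real_complex R)) -!(rmorphB, rmorphD, rmorphM, fmorphV).
rewrite !ler0c !lecR => {}t0b {}t1b /andP[_ q0_le1] /andP[_ q1_le1] {}r0b {}r1b.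
by apply: sequential_bound; rewrite ?(ler_nat R 2).
Qed.

Theorem mainTheorem6 (R : realType) (d : nat) (hd : (2 <= d)%N)
    (E sigma : bool -> bool -> 'M[R[i]]_d) :
  valid_measurements E sigma ->
  B1 E sigma <= (Num.max (3 : R) (4 * (1 - (d%:R)^-1)))%:C.
Proof.
move=> mE; have [E_psd [_ sigma_density]] := mE.
have E_le1 x a : psd (1%:M - E x a) by rewrite -(valid_measurements_compl mE).
have trE_compl x a : \tr (E x (~~ a)) = d%:R - \tr (E x a).
  by rewrite (valid_measurements_compl mE) raddfB /= mxtrace1.
have trE_bounds x : 0 <= \tr (E x true) <= d%:R.
  by rewrite psd_mxtrace_ge0 // -subr_ge0 -trE_compl psd_mxtrace_ge0.
have p_bounds x y b : 0 <= \tr (E y b *m sigma x true) <= 1.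
  have [S_psd _] := sigma_density x true.
  rewrite (psd_mxtrace_mul_ge0 (E_psd y b) S_psd).
  exact: mxtrace_mul_density_le1 (E_le1 y b) (sigma_density x true).
have p_flip_le x y : \tr (E y false *m sigma x true) <= d%:R - \tr (E y true).
  have [S_psd S_tr1] := sigma_density x true.
  rewrite -trE_compl -[X in _ <= X]mulr1 -S_tr1.
  exact: psd_mxtrace_mul_le (E_psd y false) S_psd.
pose t x := \tr (E x true).
pose p x y b := \tr (E y b *m sigma x true).
have -> : B1 E sigma = d%:R^-1 * (t false * (p false false true + p false true false)
                                 + t true * (p true true true + p true false false)).
  by rewrite /B1 /seqprob /t /p !scalemx1 !mul_mx_scalar !mxtraceZ; ring.
exact: sequential_bound_complex hd (trE_bounds _) (trE_bounds _) (p_bounds _ _ _)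
  (p_bounds _ _ _) (p_bounds _ _ _) (p_bounds _ _ _) (p_flip_le _ _) (p_flip_le _ _).
Qed.
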